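(* Let $U$ be an infinite complex matrix (rows and columns indexed by positive integers) with finitely many nonzero entries in every row and every column. Then $U$ is unitary (i.e. $UU^*=U^*U=I$) if and only if $U^*U=I$ and every row of $U$ has norm $1$.
   Context: $U^*$ denotes the Hermitian conjugate of $U$; $I$ is the infinite identity matrix; products of infinite matrices are defined entrywise by $(XY)_{ij}=\sum_k x_{ik}y_{kj}$. *)

(* complex numbers R[i] over a real closed field R
   (R[i] is a numClosedFieldType; for R a realType this is the field C). *)
From HB Require Import structures.
From mathcomp Require Import all_boot all_order all_algebra.
From mathcomp Require Import complex.
Set Implicit Arguments. Unset Strict Implicit. Unset Printing Implicit Defensive.
Import Order.TTheory GRing.Theory Num.Theory.
Local Open Scope ring_scope.

(* Infinite matrices; index i : nat stands for the positive integer i+1. *)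
Definition imatrix (T : Type) := nat -> nat -> T.

Section Defs.
Variable R : rcfType.
Local Notation C := R[i].

Definition row_col_finite (U : imatrix C) : Prop :=
  (forall i, exists N, forall j, (N <= j)%N -> U i j = 0) /\
  (forall j, exists N, forall i, (N <= i)%N -> U i j = 0).

Definition adjoint (U : imatrix C) : imatrix C := fun i j => (U j i)^*.

Definition idimx : imatrix C := fun i j => (i == j)%:R.

(* the series sum_k f k equals c (partial sums are eventually equal to c;
   for the finitely supported sequences occurring here this is exactly
   convergence of the series to c) *)
Definition sums_to (f : nat -> C) (c : C) : Prop :=
  exists N, forall M, (N <= M)%N -> \sum_(k < M) f k = c.

Definition imx_mul_eq (X Y Z : imatrix C) : Prop :=
  forall i j, sums_to (fun k => X i k * Y k j) (Z i j).

Definition unitary (U : imatrix C) : Prop :=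
  imx_mul_eq U (adjoint U) idimx /\ imx_mul_eq (adjoint U) U idimx.

Definition rows_norm1 (U : imatrix C) : Prop :=
  forall i, sums_to (fun j => `|U i j| ^+ 2) 1.

End Defs.

(* Let P_l := (U U^* )_{l i} = sum_k u_{lk} conj(u_{ik}). Only finitely many
   columns k meet row i, and those columns vanish below some row L, so P is a
   finitely supported vector. Since the columns of U are orthonormal
   (U^* U = I), the map u |-> U u is an isometry, hence |P|^2 = |row i|^2 = 1;
   moreover P_i = |row i|^2 = 1. A vector of norm 1 with a coordinate equal to
   1 vanishes elsewhere, so P is the i-th unit vector, i.e. U U^* = I. The
   converse direction only reads off the diagonal of U U^* = I. *)

From mathcomp Require Import all_boot all_order all_algebra.
From mathcomp Require Import complex.
From mathcomp Require Import ring.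
Set Implicit Arguments. Unset Strict Implicit. Unset Printing Implicit Defensive.
Import Order.TTheory GRing.Theory Num.Theory.
Local Open Scope ring_scope.

Lemma sum_ord_delta (V : nmodType) n i (F : nat -> V) : (i < n)%N ->
  \sum_(l < n) F l *+ ((l : nat) == i) = F i.
Proof.
move=> lt_in; rewrite (bigD1 (Ordinal lt_in)) //= eqxx mulr1n big1 ?addr0 // => j.
by rewrite -val_eqE /= => /negbTE ->.
Qed.

Lemma unit_vector_of_norm1 (R : numDomainType) n i (x : nat -> R) :
  (i < n)%N -> \sum_(l < n) `|x l| ^+ 2 = 1 -> x i = 1 ->
  forall l, (l < n)%N -> x l = (l == i)%:R.
Proof.
move=> lt_in norm1 xi1 l lt_ln.
have [->|neq_li] := eqVneq l i; first by rewrite xi1.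
rewrite (bigD1 (Ordinal lt_in)) //= xi1 normr1 expr1n -[RHS]addr0 in norm1.
move/addrI/eqP: norm1; rewrite psumr_eq0 => [/allP/(_ (Ordinal lt_ln))|k _].
  by rewrite mem_index_enum -val_eqE /= neq_li sqrf_eq0 normr_eq0 => /(_ isT)/eqP.
exact: exprn_ge0.
Qed.

Section InfiniteMatrices.
Variable R : rcfType.
Local Notation C := R[i].
Implicit Types (f g : nat -> C) (U : imatrix C).

Lemma sum_ord_supp f B M : (forall k, (B <= k)%N -> f k = 0) ->
  (B <= M)%N -> \sum_(k < M) f k = \sum_(k < B) f k.
Proof.
move=> f0 le_BM; rewrite -!(big_mkord xpredT) (big_cat_nat (leq0n B) le_BM) /=.
rewrite [X in _ + X = _]big_nat_cond [X in _ + X = _]big1 ?addr0 //.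
by move=> k /andP[/andP[/f0]].
Qed.

Lemma sums_to_supp f B c : (forall k, (B <= k)%N -> f k = 0) ->
  sums_to f c <-> \sum_(k < B) f k = c.
Proof.
move=> f0; split => [[N sumN]|sumB]; last by exists B => M /(sum_ord_supp f0) ->.
by rewrite -(sum_ord_supp f0 (leq_maxl B N)) sumN ?leq_maxr.
Qed.

Lemma eq_sums_to f g c : f =1 g -> sums_to f c -> sums_to g c.
Proof. by move=> eq_fg [N sumN]; exists N => M /sumN <-; apply: eq_bigr. Qed.

Lemma orthonormal_cols_isometry (V : imatrix C) L K (u : nat -> C) :
  (forall k k' : 'I_K, \sum_(l < L) (V l k)^* * V l k' = ((k : nat) == k')%:R) ->
  \sum_(l < L) `|\sum_(k < K) V l k * u k| ^+ 2 = \sum_(k < K) `|u k| ^+ 2.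
Proof.
move=> orthoV.
under eq_bigr => l _ do rewrite normCK rmorph_sum mulr_sumr /=.
rewrite exchange_big; apply: eq_bigr => k _ /=.
under eq_bigr => l _ do rewrite mulr_suml.
rewrite exchange_big /=.
under eq_bigr => k' _.
  rewrite (eq_bigr (fun l : 'I_L => ((u k)^* * u k') * ((V l k)^* * V l k')));
    last by move=> l _; rewrite rmorphM /=; ring.
  rewrite -mulr_sumr orthoV mulr_natr.
over.
rewrite normCK mulrC -(sum_ord_delta (fun j => (u k)^* * u j) (ltn_ord k)).
by apply: eq_bigr => k' _; rewrite eq_sym.
Qed.

Lemma row_col_finite_cols U K : row_col_finite U ->
  exists L, forall k l, (k < K)%N -> (L <= l)%N -> U l k = 0.
Proof.
move=> [_ colsU]; elim: K => [|K [L UL]]; first by exists 0%N.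
have [N UN] := colsU K; exists (maxn L N) => k l.
rewrite ltnS leq_eqVlt geq_max => /predU1P[-> /andP[_ /UN]|/UL UL' /andP[/UL' ? _]] //.
Qed.

End InfiniteMatrices.

Theorem lemma4 (R : rcfType) (U : imatrix R[i]) :
  row_col_finite U ->
  (unitary U <-> (imx_mul_eq (adjoint U) U (@idimx R) /\ rows_norm1 U)).
Proof.
move=> finU; split=> [[UUadj UadjU]|[UadjU rowsU]].
  split=> // i; have := UUadj i i; rewrite /idimx eqxx.
  by apply: eq_sums_to => k; rewrite normCK.
split=> // l i; have [K rowiK] := finU.1 i.
have [L colsL] := row_col_finite_cols K finU.
pose n := maxn L (maxn i.+1 l.+1).
have [le_Ln lt_in lt_ln] : [/\ (L <= n)%N, (i < n)%N & (l < n)%N].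
  by rewrite !leq_max !leqnn ?orbT.
pose P j := \sum_(k < K) U j k * (U i k)^*.
have orthoK (k k' : 'I_K) :
    \sum_(j < n) (U j k)^* * U j k' = ((k : nat) == k')%:R.
  have col0 j : (n <= j)%N -> adjoint U k j * U j k' = 0.
    by move=> /(leq_trans le_Ln) le_Lj; rewrite colsL ?mulr0.
  exact: (sums_to_supp _ col0).1 (UadjU k k').
have rowi_norm1 : \sum_(k < K) `|U i k| ^+ 2 = 1.
  have row0 k : (K <= k)%N -> `|U i k| ^+ 2 = 0.
    by move=> /rowiK ->; rewrite normr0 expr0n.
  exact: (sums_to_supp _ row0).1 (rowsU i).
have P_norm1 : \sum_(j < n) `|P j| ^+ 2 = 1.
  rewrite -rowi_norm1 (eq_bigr (fun k : 'I_K => `|(U i k)^*| ^+ 2)) => [|k _].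
    exact: (orthonormal_cols_isometry (fun k => (U i k)^*) orthoK).
  by rewrite norm_conjC.
have Pi1 : P i = 1 by rewrite -rowi_norm1; apply: eq_bigr => k _; rewrite normCK.
have rowi0 k : (K <= k)%N -> U l k * adjoint U k i = 0.
  by move=> /rowiK Uik0; rewrite /adjoint Uik0 conjC0 mulr0.
apply/(sums_to_supp _ rowi0); exact: unit_vector_of_norm1 lt_in P_norm1 Pi1 l lt_ln.
Qed.
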